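(* Let $d\ge1$, let $G$ be a graph and $F$ a set of nonedges of $G$. Let $\{B_x\}_{x\in V(M)}$ be an induced minor model of a graph $M$ in $G$ such that for every $uv\in F$, $u\in B_x$ and $v\in B_y$ for some $x\neq y$ and no edge of $G$ joins $B_x$ and $B_y$; let $F'$ be the set of the corresponding pairs $xy$ (nonedges of $M$). If $(G,F)$ is $d$-convex (resp. $d$-Cayley-connected), then $(M,F')$ is $d$-convex (resp. $d$-Cayley-connected).
   Context: A linkage $(G,\ell)$: finite simple graph $G$ and $\ell:E(G)\to\mathbb{R}_{\ge0}$ (squared lengths). A $d$-realization is $p:V(G)\to\mathbb{R}^d$ with $\|p(a)-p(b)\|^2=\ell(ab)$ for all $ab\in E(G)$; $\mathcal{C}^d(G,\ell)$ is the set of these. For an indexed set $F=\{u_1v_1,\dots,u_mv_m\}$ of nonedges (pairs of distinct non-adjacent vertices), $\phi_F(p)=(\|p(u_i)-p(v_i)\|^2)_i$ and $\Omega^d_F(G,\ell)=\phi_F(\mathcal{C}^d(G,\ell))$. $(G,F)$ is $d$-convex (resp. $d$-Cayley-connected) if $\Omega^d_F(G,\ell)$ is convex (resp. path-connected) for every $\ell$; the empty set counts as convex and connected. An induced minor model of $M$ in $G$ is a partition $\{B_x\}_{x\in V(M)}$ of $V(G)$ into nonempty sets each inducing a connected subgraph, such that $xy\in E(M)$ if and only if some edge of $G$ joins $B_x$ and $B_y$ (i.e. $M$ arises from $G$ by contractions only). *)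

From HB Require Import structures.
From mathcomp Require Import all_boot all_order all_algebra.
From mathcomp Require Import all_classical all_reals all_analysis.
Unset Implicit Arguments.
Import Order.TTheory GRing.Theory Num.Theory.
Import numFieldNormedType.Exports.
Local Open Scope classical_set_scope.
Local Open Scope ring_scope.

Definition simple_graph (T : finType) (e : rel T) : Prop :=
  symmetric e /\ irreflexive e.

Definition sqdist (R : realType) (d : nat) (x y : 'rV[R]_d) : R :=
  \sum_(i < d) (x ord0 i - y ord0 i) ^+ 2.

(* admissible squared edge lengths l : E(G) -> R_{>=0}
   (encoded as a function on ordered pairs, symmetric and nonneg on edges) *)
Definition edge_lengths (R : realType) (T : finType) (e : rel T)
    (l : T -> T -> R) : Prop :=
  forall a b, e a b -> l a b = l b a /\ 0 <= l a b.

Definition realizations (R : realType) (d : nat) (T : finType) (e : rel T)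
    (l : T -> T -> R) : set (T -> 'rV[R]_d) :=
  [set p | forall a b, e a b -> sqdist R d (p a) (p b) = l a b].

Definition nonedges (T : finType) (e : rel T) (m : nat) (F : 'I_m -> T * T)
    : Prop :=
  forall i, (F i).1 != (F i).2 /\ ~~ e (F i).1 (F i).2.

Definition phiF (R : realType) (d : nat) (T : finType) (m : nat)
    (F : 'I_m -> T * T) (p : T -> 'rV[R]_d) : 'rV[R]_m :=
  \row_(i < m) sqdist R d (p (F i).1) (p (F i).2).

Definition Omega (R : realType) (d : nat) (T : finType) (e : rel T)
    (m : nat) (F : 'I_m -> T * T) (l : T -> T -> R) : set 'rV[R]_m :=
  phiF R d T m F @` realizations R d T e l.

Definition convex_subset (R : realType) (m : nat) (A : set 'rV[R]_m) : Prop :=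
  forall x y t, A x -> A y -> 0 <= t <= 1 -> A (t *: x + (1 - t) *: y).

Definition path_connected_subset (R : realType) (m : nat) (A : set 'rV[R]_m)
    : Prop :=
  forall x y, A x -> A y ->
    exists g : R -> 'rV[R]_m,
      [/\ {within `[(0:R), (1:R)], continuous g}, g 0 = x, g 1 = y &
          forall t, 0 <= t <= 1 -> A (g t)].

Definition d_convex (R : realType) (d : nat) (T : finType) (e : rel T)
    (m : nat) (F : 'I_m -> T * T) : Prop :=
  forall l : T -> T -> R, edge_lengths R T e l -> convex_subset R m (Omega R d T e m F l).

Definition d_cayley_connected (R : realType) (d : nat) (T : finType)
    (e : rel T) (m : nat) (F : 'I_m -> T * T) : Prop :=
  forall l : T -> T -> R, edge_lengths R T e l ->
    path_connected_subset R m (Omega R d T e m F l).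

(* Induced minor model of M = (S, eM) in G = (T, e), given by the map
   f : V(G) -> V(M) sending each vertex to the index of its block
   (B_x = f^{-1}(x)). *)
Definition induced_minor_model (T S : finType) (e : rel T) (eM : rel S)
    (f : T -> S) : Prop :=
  [/\ (forall x : S, exists a : T, f a = x),
      (forall a b : T, f a = f b ->
         connect [rel u v | [&& e u v, f u == f a & f v == f a]] a b) &
      (forall x y : S, x != y ->
         (eM x y <-> exists a b, [/\ f a = x, f b = y & e a b]))].

From HB Require Import structures.
From mathcomp Require Import all_boot all_order all_algebra.
From mathcomp Require Import all_classical all_reals all_analysis.
Set Implicit Arguments.
Unset Strict Implicit.
Unset Printing Implicit Defensive.

Import Order.TTheory GRing.Theory Num.Theory.
Local Open Scope classical_set_scope.
Local Open Scope ring_scope.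

(* Contracting the blocks identifies the Cayley spaces. Give every edge inside
   a block length 0 and every edge between blocks B_x, B_y the length of xy.
   A realization of this linkage of G is constant on each (connected) block,
   so it is exactly a realization of M composed with the block map, and both
   measure the same distances on F. Hence Omega_F'(M, l) = Omega_F(G, l o f),
   and convexity or path-connectedness transfers. *)

Lemma sqdistxx (R : realType) (d : nat) (x : 'rV[R]_d) : sqdist R d x x = 0.
Proof. by apply: big1 => i _; rewrite subrr expr0n. Qed.

Lemma sqdist_eq0 (R : realType) (d : nat) (x y : 'rV[R]_d) :
  sqdist R d x y = 0 -> x = y.
Proof.
rewrite /sqdist => /eqP; rewrite psumr_eq0 => [/allP sq0|i _]; last exact: sqr_ge0.
apply/matrixP => i j; rewrite (ord1 i).
by have := sq0 j (mem_index_enum j); rewrite /= sqrf_eq0 subr_eq0 => /eqP.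
Qed.

Lemma connect_fun_eq (T : finType) (V : eqType) (r : rel T) (p : T -> V) :
  (forall u v, r u v -> p u = p v) -> forall a b, connect r a b -> p a = p b.
Proof.
move=> r_p a b ab.
have cl : closed_mem r (mem [pred u | p u == p a]).
  by move=> u v /r_p; rewrite !inE => ->.
by have := closed_connect cl ab; rewrite !inE eqxx => /esym/eqP.
Qed.

Definition pullback_lengths (R : realType) (T S : finType) (f : T -> S)
    (l : S -> S -> R) : T -> T -> R :=
  fun a b => if f a == f b then 0 else l (f a) (f b).

Section ContractBlocks.

Variables (R : realType) (d : nat) (T S : finType) (e : rel T) (eM : rel S).
Variable f : T -> S.
Hypothesis model : induced_minor_model T S e eM f.
Hypothesis irr_eM : irreflexive eM.
Variable l : S -> S -> R.

Let lG := pullback_lengths f l.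

Lemma edge_between_blocks (a b : T) :
  f a != f b -> e a b -> eM (f a) (f b).
Proof. by case: model => _ _ edgeM fab eab; apply/(edgeM _ _ fab); exists a, b. Qed.

Lemma edge_lengths_pullback :
  edge_lengths R S eM l -> edge_lengths R T e lG.
Proof.
move=> lM a b eab; rewrite /lG /pullback_lengths [f b == f a]eq_sym.
case: eqP => [// | /eqP fab].
exact/lM/edge_between_blocks.
Qed.

Lemma realization_comp (q : S -> 'rV[R]_d) :
  realizations R d S eM l q -> realizations R d T e lG (q \o f).
Proof.
move=> qM a b eab; rewrite /lG /pullback_lengths /=.
case: eqP => [-> | /eqP fab]; first exact: sqdistxx.
exact/qM/edge_between_blocks.
Qed.

Lemma realization_block_constant (p : T -> 'rV[R]_d) :
  realizations R d T e lG p -> forall a b, f a = f b -> p a = p b.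
Proof.
case: model => _ conn _ pG a b /conn; apply: connect_fun_eq.
move=> u v /and3P[euv /eqP fu /eqP fv]; apply: sqdist_eq0.
by rewrite pG // /lG /pullback_lengths fu fv eqxx.
Qed.

Lemma realization_factor (p : T -> 'rV[R]_d) :
  realizations R d T e lG p ->
  exists2 q, realizations R d S eM l q & forall a, q (f a) = p a.
Proof.
move=> pG; case: model => _ _ edgeM.
pose q x := if [pick a | f a == x] is Some a then p a else 0.
have qf a : q (f a) = p a.
  rewrite /q; case: pickP => [b /eqP fb | /(_ a)]; last by rewrite eqxx.
  exact: (realization_block_constant pG).
exists q => // x y exy.
have xy : x != y by apply: contraTneq exy => ->; rewrite irr_eM.
have [a [b [fa fb eab]]] := (edgeM _ _ xy).1 exy; subst x y.
by rewrite !qf pG // /lG /pullback_lengths (negbTE xy).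
Qed.

Lemma Omega_contract (m : nat) (F : 'I_m -> T * T) :
  Omega R d S eM m (fun i => (f (F i).1, f (F i).2)) l = Omega R d T e m F lG.
Proof.
apply/seteqP; split => _ [q qM <-].
- by exists (q \o f); [exact: realization_comp | apply/rowP => i; rewrite !mxE].
- have [q' q'M q'f] := realization_factor qM.
  by exists q' => //; apply/rowP => i; rewrite !mxE /= !q'f.
Qed.

End ContractBlocks.

Theorem mainTheorem6 (R : realType) (d : nat) (hd : (0 < d)%N)
  (T : finType) (e : rel T) (hG : simple_graph T e)
  (S : finType) (eM : rel S) (hM : simple_graph S eM)
  (f : T -> S) (hmodel : induced_minor_model T S e eM f)
  (m : nat) (F : 'I_m -> T * T) (hF : nonedges T e m F)
  (hsep : forall i : 'I_m, f (F i).1 != f (F i).2 /\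
     (forall a b : T, f a = f (F i).1 -> f b = f (F i).2 -> ~~ e a b)) :
  (d_convex R d T e m F -> d_convex R d S eM m (fun i => (f (F i).1, f (F i).2))) /\
  (d_cayley_connected R d T e m F ->
     d_cayley_connected R d S eM m (fun i => (f (F i).1, f (F i).2))).
Proof.
have [_ irr_eM] := hM.
split=> G_prop l lM; rewrite (Omega_contract d hmodel irr_eM l F);
  exact: G_prop (edge_lengths_pullback hmodel lM).
Qed.
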